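(* Let $Q$ be a multiplicative equivariantly supported based quantal frame with base locale $A$ and support $\varsigma$. Consider the localic graph with $\mathcal O(G_0)=A$, $\mathcal O(G_1)=Q$, $d:G_1\to G_0$ given by $d^*(a)=a\triangleright 1_Q$, $i:G_1\to G_1$ given by $i^*(x)=x^*$, $r=d\circ i$, $G_2$ the pullback of $r$ and $d$ (so $\mathcal O(G_2)=Q\otimes_A Q$, with projections $\pi_1,\pi_2:G_2\to G_1$ satisfying $r\circ\pi_1=d\circ\pi_2$), and $m:G_2\to G_1$ defined by $m^*(a)=\bigvee_{xy\le a}x\otimes y$. Then $G$ is an involutive open semicategory (in particular $d\circ m=d\circ\pi_1$ and $r\circ m=r\circ\pi_2$, $m$ is associative, $i$ is an involution for $m$, and $d$ is open).
   Context: For a locale $A$, an $A$-$A$-bimodule is a sup-lattice $M$ with actions $a\triangleright m$, $m\triangleleft a$ preserving joins in each variable, with $1_A\triangleright m=m$, $(a\wedge b)\triangleright m=a\triangleright(b\triangleright m)$, $m\triangleleft1_A=m$, $m\triangleleft(a\wedge b)=(m\triangleleft a)\triangleleft b$, $(a\triangleright m)\triangleleft b=a\triangleright(m\triangleleft b)$. An $A$-$A$-quantale is such a $Q$ with associative join-preserving multiplication and $(a\triangleright x)y=a\triangleright(xy)$, $(x\triangleleft a)y=x(a\triangleright y)$, $(xy)\triangleleft a=x(y\triangleleft a)$; involutive if there is a join-preserving $x\mapsto x^*$ with $x^{**}=x$, $(xy)^*=y^*x^*$, $(a\triangleright(x\triangleleft b))^*=b\triangleright(x^*\triangleleft a)$.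 $1_Q$ is the top. A support is a join-preserving $\varsigma:Q\to A$ with $\varsigma(1_Q)=1_A$, $\varsigma(x)\triangleright y\le xx^*y$, $\varsigma(x)\triangleright x=x$; equivariant if $\varsigma(a\triangleright x)=a\wedge\varsigma(x)$. A based quantal frame is an involutive $A$-$A$-quantale which is a frame with $(a\triangleright x)\wedge y=a\triangleright(x\wedge y)$, $(x\triangleleft a)\wedge y=(x\wedge y)\triangleleft a$. $Q\otimes_AQ$ is the quotient of the sup-lattice tensor product $Q\otimes Q$ by $x\otimes(a\triangleright y)=(x\triangleleft a)\otimes y$; the multiplication induces $\mu_A:Q\otimes_AQ\to Q$, and $Q$ is multiplicative if the right adjoint of $\mu_A$ preserves arbitrary joins. An involutive open semicategory is an internal category without units in locales (associative composition $m$ with $d\circ m=d\circ\pi_1$, $r\circ m=r\circ\pi_2$), equipped with an involution $i$ ($i\circ i=\mathrm{id}$, $d\circ i=r$) that reverses composition, and with $d$ an open map. *)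

Section Lattice.
Context {T : Type} (le : T -> T -> Prop) (sup : (T -> Prop) -> T).

Definition is_clat : Prop :=
  (forall x, le x x) /\
  (forall x y z, le x y -> le y z -> le x z) /\
  (forall x y, le x y -> le y x -> x = y) /\
  (forall (S : T -> Prop) x, S x -> le x (sup S)) /\
  (forall (S : T -> Prop) z, (forall x, S x -> le x z) -> le (sup S) z).

Definition lmeet (x y : T) : T := sup (fun z => le z x /\ le z y).
Definition ltop : T := sup (fun _ => True).

Definition is_frame : Prop :=
  is_clat /\
  forall x (S : T -> Prop),
    lmeet x (sup S) = sup (fun z => exists s, S s /\ z = lmeet x s).
End Lattice.

Definition img {X Y : Type} (f : X -> Y) (P : X -> Prop) : Y -> Prop :=
  fun y => exists x, P x /\ y = f x.

Definition sup_pres {X Y : Type} (supX : (X -> Prop) -> X) (supY : (Y -> Prop) -> Y)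
  (f : X -> Y) : Prop := forall P, f (supX P) = supY (img f P).

(* frame homomorphism = inverse image map of a locale map *)
Definition frame_hom {X Y : Type} (leX : X -> X -> Prop) (supX : (X -> Prop) -> X)
  (leY : Y -> Y -> Prop) (supY : (Y -> Prop) -> Y) (f : X -> Y) : Prop :=
  sup_pres supX supY f /\
  (forall x y, f (lmeet leX supX x y) = lmeet leY supY (f x) (f y)) /\
  f (ltop supX) = ltop supY.

Record qdata := QData {
  A : Type;
  leA : A -> A -> Prop;
  supA : (A -> Prop) -> A;
  Q : Type;
  leQ : Q -> Q -> Prop;
  supQ : (Q -> Prop) -> Q;
  actl : A -> Q -> Q;
  actr : Q -> A -> Q;
  mul : Q -> Q -> Q;
  star : Q -> Q;
  supp : Q -> A
}.

Section QDefs.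
Variable D : qdata.

Local Notation A := (A D).
Local Notation Q := (Q D).
Local Notation leA := (leA D).
Local Notation supA := (supA D).
Local Notation leQ := (leQ D).
Local Notation supQ := (supQ D).
Local Notation actl := (actl D).
Local Notation actr := (actr D).
Local Notation mul := (mul D).
Local Notation star := (star D).
Local Notation supp := (supp D).

Definition meetA := lmeet leA supA.
Definition topA := ltop supA.
Definition meetQ := lmeet leQ supQ.
Definition topQ := ltop supQ.

Definition is_bimodule : Prop :=
  is_clat leQ supQ /\
  (forall P m, actl (supA P) m = supQ (img (fun a => actl a m) P)) /\
  (forall a P, actl a (supQ P) = supQ (img (actl a) P)) /\
  (forall m P, actr m (supA P) = supQ (img (actr m) P)) /\
  (forall P a, actr (supQ P) a = supQ (img (fun m => actr m a) P)) /\
  (forall m, actl topA m = m) /\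
  (forall a b m, actl (meetA a b) m = actl a (actl b m)) /\
  (forall m, actr m topA = m) /\
  (forall m a b, actr m (meetA a b) = actr (actr m a) b) /\
  (forall a m b, actr (actl a m) b = actl a (actr m b)).

Definition is_AA_quantale : Prop :=
  is_bimodule /\
  (forall x y z, mul (mul x y) z = mul x (mul y z)) /\
  (forall P y, mul (supQ P) y = supQ (img (fun x => mul x y) P)) /\
  (forall x P, mul x (supQ P) = supQ (img (mul x) P)) /\
  (forall a x y, mul (actl a x) y = actl a (mul x y)) /\
  (forall x a y, mul (actr x a) y = mul x (actl a y)) /\
  (forall x y a, actr (mul x y) a = mul x (actr y a)).

Definition is_involutive_AA_quantale : Prop :=
  is_AA_quantale /\
  sup_pres supQ supQ star /\
  (forall x, star (star x) = x) /\
  (forall x y, star (mul x y) = mul (star y) (star x)) /\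
  (forall a x b, star (actl a (actr x b)) = actl b (actr (star x) a)).

Definition is_based_quantal_frame : Prop :=
  is_frame leA supA /\
  is_involutive_AA_quantale /\
  is_frame leQ supQ /\
  (forall a x y, meetQ (actl a x) y = actl a (meetQ x y)) /\
  (forall x a y, meetQ (actr x a) y = actr (meetQ x y) a).

Definition is_support : Prop :=
  sup_pres supQ supA supp /\
  supp topQ = topA /\
  (forall x y, leQ (actl (supp x) y) (mul (mul x (star x)) y)) /\
  (forall x, actl (supp x) x = x).

Definition is_equivariant_support : Prop :=
  is_support /\ forall a x, supp (actl a x) = meetA a (supp x).

(* An element of Q (x)_A Q is a subset S of Q x Q that is down-closed,
   closed under joins in each variable (so it is an element of the
   sup-lattice tensor product Q (x) Q, S = \/ {x (x) y | (x,y) in S}),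
   and saturated for the relation x (x) (a |> y) = (x <| a) (x) y. *)
Definition tclosed (S : Q -> Q -> Prop) : Prop :=
  (forall x y x' y', S x y -> leQ x' x -> leQ y' y -> S x' y') /\
  (forall P y, (forall x, P x -> S x y) -> S (supQ P) y) /\
  (forall x P, (forall y, P y -> S x y) -> S x (supQ P)) /\
  (forall x a y, S x (actl a y) <-> S (actr x a) y).

(* the join in Q (x)_A Q of the generators x (x) y with P x y *)
Definition tclos (P : Q -> Q -> Prop) : Q -> Q -> Prop :=
  fun u v => forall S, tclosed S -> (forall x y, P x y -> S x y) -> S u v.

Definition teq (S R : Q -> Q -> Prop) : Prop := forall u v, S u v <-> R u v.

(* Q (x)_A Q (x)_A Q, same construction *)
Definition tclosed3 (S : Q -> Q -> Q -> Prop) : Prop :=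
  (forall x y z x' y' z', S x y z -> leQ x' x -> leQ y' y -> leQ z' z -> S x' y' z') /\
  (forall P y z, (forall x, P x -> S x y z) -> S (supQ P) y z) /\
  (forall x P z, (forall y, P y -> S x y z) -> S x (supQ P) z) /\
  (forall x y P, (forall z, P z -> S x y z) -> S x y (supQ P)) /\
  (forall x a y z, S x (actl a y) z <-> S (actr x a) y z) /\
  (forall x y a z, S x y (actl a z) <-> S x (actr y a) z).

Definition tclos3 (P : Q -> Q -> Q -> Prop) : Q -> Q -> Q -> Prop :=
  fun u v w => forall S, tclosed3 S -> (forall x y z, P x y z -> S x y z) -> S u v w.

Definition teq3 (S R : Q -> Q -> Q -> Prop) : Prop := forall u v w, S u v w <-> R u v w.

Definition muA (S : Q -> Q -> Prop) : Q :=
  supQ (fun q => exists x y, S x y /\ q = mul x y).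

(* multiplicative: the right adjoint of mu_A preserves arbitrary joins *)
Definition is_multiplicative : Prop :=
  exists g : Q -> Q -> Q -> Prop,
    (forall a, tclosed (g a)) /\
    (forall S a, tclosed S -> (leQ (muA S) a <-> (forall x y, S x y -> g a x y))) /\
    (forall P, teq (g (supQ P)) (tclos (fun u v => exists a, P a /\ g a u v))).

(* frame homomorphism Q -> Q (x)_A Q *)
Definition tframe_hom (f : Q -> Q -> Q -> Prop) : Prop :=
  (forall x, tclosed (f x)) /\
  (forall P, teq (f (supQ P)) (tclos (fun u v => exists x, P x /\ f x u v))) /\
  (forall x y, teq (f (meetQ x y)) (fun u v => f x u v /\ f y u v)) /\
  teq (f topQ) (fun _ _ => True).

Definition dstar (a : A) : Q := actl a topQ.
Definition istar (x : Q) : Q := star x.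
Definition rstar (a : A) : Q := istar (dstar a).      (* r^* = (d o i)^* = i^* o d^* *)
Definition pi1star (x : Q) : Q -> Q -> Prop :=        (* x (x) 1 *)
  tclos (fun u v => u = x /\ v = topQ).
Definition pi2star (y : Q) : Q -> Q -> Prop :=        (* 1 (x) y *)
  tclos (fun u v => u = topQ /\ v = y).
Definition mstar (a : Q) : Q -> Q -> Prop :=
  tclos (fun x y => leQ (mul x y) a).
(* (m x id)^* and (id x m)^* : Q(x)Q -> Q(x)Q(x)Q, x(x)y(x)z |-> ... *)
Definition m_id_star (S : Q -> Q -> Prop) : Q -> Q -> Q -> Prop :=
  tclos3 (fun x y z => S (mul x y) z).
Definition id_m_star (S : Q -> Q -> Prop) : Q -> Q -> Q -> Prop :=
  tclos3 (fun x y z => S x (mul y z)).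
(* <i o pi2, i o pi1>^* : x (x) y |-> y^* (x) x^* *)
Definition twist_star (S : Q -> Q -> Prop) : Q -> Q -> Prop :=
  fun u v => S (star v) (star u).

(* d is an open locale map: d^* has a left adjoint satisfying Frobenius *)
Definition d_open : Prop :=
  exists l : Q -> A,
    (forall x a, leA (l x) a <-> leQ x (dstar a)) /\
    (forall x a, l (meetQ x (dstar a)) = meetA (l x) a).

Definition involutive_open_semicategory : Prop :=
  frame_hom leA supA leQ supQ dstar /\
  frame_hom leQ supQ leQ supQ istar /\
  tframe_hom pi1star /\ tframe_hom pi2star /\
  tframe_hom mstar /\
  (* pullback square r o pi1 = d o pi2 *)
  (forall a, teq (pi1star (rstar a)) (pi2star (dstar a))) /\
  (* d o m = d o pi1,  r o m = r o pi2 *)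
  (forall a, teq (mstar (dstar a)) (pi1star (dstar a))) /\
  (forall a, teq (mstar (rstar a)) (pi2star (rstar a))) /\
  (* associativity: m o (m x id) = m o (id x m) *)
  (forall a, teq3 (m_id_star (mstar a)) (id_m_star (mstar a))) /\
  (* i o i = id, d o i = r *)
  (forall x, istar (istar x) = x) /\
  (forall a, istar (dstar a) = rstar a) /\
  (* i reverses composition: i o m = m o <i o pi2, i o pi1> *)
  (forall a, teq (mstar (istar a)) (twist_star (mstar a))) /\
  d_open.

End QDefs.

(* Every inverse image involved is described by a single inequality in Q:
   m^*(a) contains x (x) y iff x y <= a, pi1^*(b) contains x (x) y iff
   x <| s(y) <= b, and pi2^*(b) contains x (x) y iff s(x^* ) |> y <= b
   (using the support to move the second factor across the tensor, since
   y = s(y) |> y).  The semicategory equations then become inequalities in Q,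
   proved with s(x) |> y <= x x^* y; joins are preserved by m^* exactly because
   the right adjoint of mu_A, which is m^*, preserves them; and the left
   adjoint of d^* witnessing openness is the support itself. *)

From Stdlib Require Import Setoid.

Section CompleteLattice.
Context {T : Type} {le : T -> T -> Prop} {sup : (T -> Prop) -> T}.
Hypothesis Hcl : is_clat le sup.

Lemma clat_refl x : le x x. Proof. apply Hcl. Qed.
Lemma clat_trans x y z : le x y -> le y z -> le x z. Proof. apply Hcl. Qed.
Lemma clat_antisym x y : le x y -> le y x -> x = y. Proof. apply Hcl. Qed.
Lemma le_sup (S : T -> Prop) x : S x -> le x (sup S). Proof. apply Hcl. Qed.
Lemma sup_le (S : T -> Prop) z : (forall x, S x -> le x z) -> le (sup S) z.
Proof. apply Hcl. Qed.

Lemma le_top x : le x (ltop sup). Proof. now apply le_sup. Qed.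

Lemma meet_le_l x y : le (lmeet le sup x y) x.
Proof. apply sup_le. now intros w [Hwx _]. Qed.

Lemma meet_le_r x y : le (lmeet le sup x y) y.
Proof. apply sup_le. now intros w [_ Hwy]. Qed.

Lemma le_meet_iff x y z : le z (lmeet le sup x y) <-> le z x /\ le z y.
Proof.
  split.
  - intros Hz. split; eapply clat_trans; [exact Hz | apply meet_le_l | exact Hz | apply meet_le_r].
  - intros Hz. now apply le_sup.
Qed.

Lemma meet_comm x y : lmeet le sup x y = lmeet le sup y x.
Proof.
  apply clat_antisym; apply le_meet_iff; split; apply meet_le_l || apply meet_le_r.
Qed.

Lemma meet_top_l x : lmeet le sup (ltop sup) x = x.
Proof.
  apply clat_antisym.
  - apply meet_le_r.
  - apply le_meet_iff; split; [apply le_top | apply clat_refl].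
Qed.
End CompleteLattice.

Lemma sup_pres_mono {X Y : Type} {leX : X -> X -> Prop} {supX : (X -> Prop) -> X}
  {leY : Y -> Y -> Prop} {supY : (Y -> Prop) -> Y} (f : X -> Y) :
  is_clat leX supX -> is_clat leY supY -> sup_pres supX supY f ->
  forall x y, leX x y -> leY (f x) (f y).
Proof.
  intros HX HY Hf x y Hxy.
  assert (Hpair : supX (fun z => z = x \/ z = y) = y).
  { apply (clat_antisym HX).
    - apply (sup_le HX); intros z [-> | ->]; [exact Hxy | apply (clat_refl HX)].
    - apply (le_sup HX); now right. }
  rewrite <- Hpair, Hf. apply (le_sup HY). exists x; auto.
Qed.

Section TensorClosure.
Variable D : qdata.

Local Notation tclos := (tclos D).
Local Notation tclosed := (tclosed D).

Lemma tclos_incl (P : Q D -> Q D -> Prop) x y : P x y -> tclos P x y.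
Proof. intros HP S _ HPS. auto. Qed.

Lemma tclos_min (P S : Q D -> Q D -> Prop) :
  tclosed S -> (forall x y, P x y -> S x y) -> forall u v, tclos P u v -> S u v.
Proof. intros HS HPS u v H. now apply H. Qed.

Lemma tclos_closed (P : Q D -> Q D -> Prop) : tclosed (tclos P).
Proof.
  split; [|split; [|split]].
  - intros x y x' y' H Hx Hy S HS HP.
    apply (proj1 HS x y); [exact (H S HS HP) | exact Hx | exact Hy].
  - intros P' y H S HS HP. apply (proj1 (proj2 HS)). intros x Px. now apply H.
  - intros x P' H S HS HP. apply (proj1 (proj2 (proj2 HS))). intros y Py. now apply H.
  - intros x a y. split; intros H S HS HP; apply (proj2 (proj2 (proj2 HS))); now apply H.
Qed.

Lemma tclos_mono (P R : Q D -> Q D -> Prop) :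
  (forall x y, P x y -> R x y) -> forall u v, tclos P u v -> tclos R u v.
Proof.
  intros HPR. apply tclos_min; [apply tclos_closed|]. intros x y Hxy.
  now apply tclos_incl, HPR.
Qed.

Lemma tclos_teq (P R : Q D -> Q D -> Prop) :
  (forall x y, P x y -> tclos R x y) -> (forall x y, R x y -> tclos P x y) ->
  teq D (tclos P) (tclos R).
Proof. intros HPR HRP u v; split; apply tclos_min; auto; apply tclos_closed. Qed.

Lemma tclos3_ext (P R : Q D -> Q D -> Q D -> Prop) :
  (forall x y z, P x y z <-> R x y z) -> teq3 D (tclos3 D P) (tclos3 D R).
Proof.
  intros HPR u v w; split; intros H S HS HS'; apply (H S HS);
    intros x y z Hxyz; apply HS', HPR, Hxyz.
Qed.
End TensorClosure.

Section SupportedQuantalFrame.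
Variable D : qdata.
Hypothesis HQ : is_based_quantal_frame D.
Hypothesis Hs : is_equivariant_support D.

Local Notation A := (A D).
Local Notation Q := (Q D).
Local Notation leA := (leA D).
Local Notation supA := (supA D).
Local Notation leQ := (leQ D).
Local Notation supQ := (supQ D).
Local Notation actl := (actl D).
Local Notation actr := (actr D).
Local Notation mul := (mul D).
Local Notation star := (star D).
Local Notation supp := (supp D).
Local Notation topQ := (topQ D).
Local Notation topA := (topA D).
Local Notation meetQ := (meetQ D).
Local Notation meetA := (meetA D).
Local Notation tclos := (tclos D).
Local Notation tclosed := (tclosed D).
Local Notation dstar := (dstar D).
Local Notation mstar := (mstar D).
Local Notation pi1star := (pi1star D).
Local Notation pi2star := (pi2star D).

Ltac unpack_frame :=
  destruct HQ as [[clA _] [[[[clQ [aSA [aSQ [rSA [rSQ [aT [aM [rT [rM _]]]]]]]]]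
    [mA [mSl [mSr [mAl [mAr rMu]]]]]] [sS [ss [sM sA]]]] [_ [mQl _]]]].
Ltac unpack_support := destruct Hs as [[pS [pT [pLe pFix]]] pEq].

Lemma clA : is_clat leA supA. Proof. now unpack_frame. Qed.
Lemma clQ : is_clat leQ supQ. Proof. now unpack_frame. Qed.
Lemma actl_supA P m : actl (supA P) m = supQ (img (fun a => actl a m) P).
Proof. now unpack_frame. Qed.
Lemma actl_supQ a P : actl a (supQ P) = supQ (img (actl a) P). Proof. now unpack_frame. Qed.
Lemma actr_supA m P : actr m (supA P) = supQ (img (actr m) P). Proof. now unpack_frame. Qed.
Lemma actr_supQ P a : actr (supQ P) a = supQ (img (fun m => actr m a) P).
Proof. now unpack_frame. Qed.
Lemma actl_top m : actl topA m = m. Proof. now unpack_frame. Qed.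
Lemma actl_meet a b m : actl (meetA a b) m = actl a (actl b m). Proof. now unpack_frame. Qed.
Lemma actr_top m : actr m topA = m. Proof. now unpack_frame. Qed.
Lemma actr_meet m a b : actr m (meetA a b) = actr (actr m a) b. Proof. now unpack_frame. Qed.
Lemma mulA x y z : mul (mul x y) z = mul x (mul y z). Proof. now unpack_frame. Qed.
Lemma mul_supl P y : mul (supQ P) y = supQ (img (fun x => mul x y) P).
Proof. now unpack_frame. Qed.
Lemma mul_supr x P : mul x (supQ P) = supQ (img (mul x) P). Proof. now unpack_frame. Qed.
Lemma mul_actl a x y : mul (actl a x) y = actl a (mul x y). Proof. now unpack_frame. Qed.
Lemma mul_actr x a y : mul (actr x a) y = mul x (actl a y). Proof. now unpack_frame. Qed.
Lemma actr_mul x y a : actr (mul x y) a = mul x (actr y a). Proof. now unpack_frame. Qed.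
Lemma star_sup : sup_pres supQ supQ star. Proof. now unpack_frame. Qed.
Lemma starK x : star (star x) = x. Proof. now unpack_frame. Qed.
Lemma star_mul x y : star (mul x y) = mul (star y) (star x). Proof. now unpack_frame. Qed.
Lemma star_act a x b : star (actl a (actr x b)) = actl b (actr (star x) a).
Proof. now unpack_frame. Qed.
Lemma meetQ_actl a x y : meetQ (actl a x) y = actl a (meetQ x y). Proof. now unpack_frame. Qed.

Lemma supp_sup : sup_pres supQ supA supp. Proof. now unpack_support. Qed.
Lemma supp_top : supp topQ = topA. Proof. now unpack_support. Qed.
Lemma supp_le x y : leQ (actl (supp x) y) (mul (mul x (star x)) y).
Proof. now unpack_support. Qed.
Lemma supp_actl_id x : actl (supp x) x = x. Proof. now unpack_support. Qed.
Lemma supp_actl a x : supp (actl a x) = meetA a (supp x). Proof. now unpack_support. Qed.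

Lemma meetA_comm a b : meetA a b = meetA b a. Proof. exact (meet_comm clA a b). Qed.
Lemma meetQ_comm x y : meetQ x y = meetQ y x. Proof. exact (meet_comm clQ x y). Qed.
Lemma meetQ_top_l x : meetQ topQ x = x. Proof. exact (meet_top_l clQ x). Qed.

Lemma actl_mono a b x y : leA a b -> leQ x y -> leQ (actl a x) (actl b y).
Proof.
  intros Hab Hxy. apply (clat_trans clQ) with (actl a y).
  - exact (sup_pres_mono (actl a) clQ clQ (actl_supQ a) _ _ Hxy).
  - exact (sup_pres_mono (fun a => actl a y) clA clQ (fun P => actl_supA P y) _ _ Hab).
Qed.

Lemma actr_mono x y a b : leQ x y -> leA a b -> leQ (actr x a) (actr y b).
Proof.
  intros Hxy Hab. apply (clat_trans clQ) with (actr x b).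
  - exact (sup_pres_mono (actr x) clA clQ (actr_supA x) _ _ Hab).
  - exact (sup_pres_mono (fun m => actr m b) clQ clQ (fun P => actr_supQ P b) _ _ Hxy).
Qed.

Lemma mul_mono x y x' y' : leQ x x' -> leQ y y' -> leQ (mul x y) (mul x' y').
Proof.
  intros Hx Hy. apply (clat_trans clQ) with (mul x y').
  - exact (sup_pres_mono (mul x) clQ clQ (mul_supr x) _ _ Hy).
  - exact (sup_pres_mono (fun m => mul m y') clQ clQ (fun P => mul_supl P y') _ _ Hx).
Qed.

Lemma star_mono x y : leQ x y -> leQ (star x) (star y).
Proof. exact (sup_pres_mono star clQ clQ star_sup x y). Qed.

Lemma supp_mono x y : leQ x y -> leA (supp x) (supp y).
Proof. exact (sup_pres_mono supp clQ clA supp_sup x y). Qed.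

Lemma le_star x a : leQ x (star a) <-> leQ (star x) a.
Proof.
  split; intros H.
  - rewrite <- (starK a). now apply star_mono.
  - rewrite <- (starK x). now apply star_mono.
Qed.

Lemma star_top : star topQ = topQ.
Proof. apply (clat_antisym clQ); [apply (le_top clQ)|]. apply le_star, (le_top clQ). Qed.

Lemma star_actl a x : star (actl a x) = actr (star x) a.
Proof. rewrite <- (actr_top x) at 1. now rewrite star_act, actl_top. Qed.

Lemma star_actr x b : star (actr x b) = actl b (star x).
Proof. rewrite <- (actl_top (actr x b)). now rewrite star_act, actr_top. Qed.

Lemma actr_supp_star x : actr x (supp (star x)) = x.
Proof. rewrite <- (starK x) at 1. now rewrite <- star_actl, supp_actl_id, starK. Qed.

Lemma le_mul_top x : leQ x (mul x topQ).
Proof.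
  rewrite <- (supp_actl_id x) at 1.
  apply (clat_trans clQ) with (1 := supp_le x x). rewrite mulA.
  apply mul_mono; [apply (clat_refl clQ) | apply (le_top clQ)].
Qed.

Lemma rstar_actr a : rstar D a = actr topQ a.
Proof. unfold rstar, istar, dstar. now rewrite star_actl, star_top. Qed.

Lemma tclosed_mul_le c : tclosed (fun u v => leQ (mul u v) c).
Proof.
  split; [|split; [|split]].
  - intros x y x' y' H Hx Hy. eapply (clat_trans clQ); [|exact H]. now apply mul_mono.
  - intros P y H. rewrite mul_supl. apply (sup_le clQ). intros q [x [Px ->]]. auto.
  - intros x P H. rewrite mul_supr. apply (sup_le clQ). intros q [y [Py ->]]. auto.
  - intros x a y. now rewrite mul_actr.
Qed.

Lemma tclosed_actr_supp_le c : tclosed (fun u v => leQ (actr u (supp v)) c).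
Proof.
  split; [|split; [|split]].
  - intros x y x' y' H Hx Hy. eapply (clat_trans clQ); [|exact H].
    now apply actr_mono, supp_mono.
  - intros P y H. rewrite actr_supQ. apply (sup_le clQ). intros q [z [Pz ->]]. auto.
  - intros x P H. rewrite supp_sup, actr_supA. apply (sup_le clQ).
    intros q [b [[y [Py ->]] ->]]. auto.
  - intros x a y. now rewrite supp_actl, actr_meet.
Qed.

Lemma tclosed_supp_star_actl_le c : tclosed (fun u v => leQ (actl (supp (star u)) v) c).
Proof.
  split; [|split; [|split]].
  - intros x y x' y' H Hx Hy. eapply (clat_trans clQ); [|exact H].
    now apply actl_mono; [apply supp_mono, star_mono|].
  - intros P y H. rewrite star_sup, supp_sup, actl_supA. apply (sup_le clQ).
    intros q [b [[w [[z [Pz ->]] ->]] ->]]. auto.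
  - intros x P H. rewrite actl_supQ. apply (sup_le clQ). intros q [z [Pz ->]]. auto.
  - intros x a y. now rewrite star_actr, supp_actl, <- actl_meet, meetA_comm.
Qed.

Lemma mstar_char a u v : mstar a u v <-> leQ (mul u v) a.
Proof.
  split; [|exact (tclos_incl D _ u v)].
  exact (tclos_min D _ _ (tclosed_mul_le a) (fun x y Hxy => Hxy) u v).
Qed.

(* The generator (x, 1) reaches every (u, v) with u <| s(v) <= x since
   (u, v) = (u, s(v) |> v) ~ (u <| s(v), v). *)
Lemma pi1star_char x u v : pi1star x u v <-> leQ (actr u (supp v)) x.
Proof.
  split.
  - refine (tclos_min D _ _ (tclosed_actr_supp_le x) _ u v).
    intros u0 v0 [-> ->]. rewrite supp_top, actr_top. apply (clat_refl clQ).
  - intros H S HS HP. rewrite <- (supp_actl_id v). apply (proj2 (proj2 (proj2 HS))).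
    apply (proj1 HS x topQ); [auto | exact H | apply (le_top clQ)].
Qed.

Lemma pi2star_char y u v : pi2star y u v <-> leQ (actl (supp (star u)) v) y.
Proof.
  split.
  - refine (tclos_min D _ _ (tclosed_supp_star_actl_le y) _ u v).
    intros u0 v0 [-> ->]. rewrite star_top, supp_top, actl_top. apply (clat_refl clQ).
  - intros H S HS HP. rewrite <- (actr_supp_star u). apply (proj2 (proj2 (proj2 HS))).
    apply (proj1 HS topQ y); [auto | apply (le_top clQ) | exact H].
Qed.

Lemma tframe_hom_of_le_char (f : Q -> Q -> Q -> Prop) (k : Q -> Q -> Q) :
  (forall x, tclosed (f x)) ->
  (forall x u v, f x u v <-> leQ (k u v) x) ->
  (forall P u v, f (supQ P) u v -> tclos (fun u v => exists x, P x /\ f x u v) u v) ->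
  tframe_hom D f.
Proof.
  intros Hcl Hk Hsup. split; [exact Hcl | split; [|split]].
  - intros P u v. split; [apply Hsup|].
    apply tclos_min; [apply Hcl|]. intros x0 y0 [x [Px Hx]].
    apply Hk. apply Hk in Hx. apply (clat_trans clQ) with (1 := Hx). now apply (le_sup clQ).
  - intros x y u v. rewrite !Hk. apply (le_meet_iff clQ).
  - intros u v. rewrite Hk. split; [auto | intros _; apply (le_top clQ)].
Qed.

Lemma pi1star_tframe_hom : tframe_hom D pi1star.
Proof.
  apply (tframe_hom_of_le_char _ (fun u v => actr u (supp v)));
    [intros; apply tclos_closed | exact pi1star_char|].
  intros P. apply tclos_min; [apply tclos_closed|]. intros u0 v0 [-> ->].
  apply (proj1 (proj2 (tclos_closed _ _))). intros x Px.
  apply tclos_incl. exists x. split; [exact Px | now apply tclos_incl].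
Qed.

Lemma pi2star_tframe_hom : tframe_hom D pi2star.
Proof.
  apply (tframe_hom_of_le_char _ (fun u v => actl (supp (star u)) v));
    [intros; apply tclos_closed | exact pi2star_char|].
  intros P. apply tclos_min; [apply tclos_closed|]. intros u0 v0 [-> ->].
  apply (proj1 (proj2 (proj2 (tclos_closed _ _)))). intros y Py.
  apply tclos_incl. exists y. split; [exact Py | now apply tclos_incl].
Qed.

Lemma muA_right_adjoint_char (g : Q -> Q -> Q -> Prop) :
  (forall a, tclosed (g a)) ->
  (forall S a, tclosed S -> (leQ (muA D S) a <-> (forall x y, S x y -> g a x y))) ->
  forall a u v, g a u v <-> mstar a u v.
Proof.
  intros Hg Hadj a u v. rewrite mstar_char. split; intros H.
  - apply (clat_trans clQ) with (muA D (g a)); [now apply (le_sup clQ); exists u, v|].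
    apply (Hadj _ a (Hg a)); auto.
  - apply (Hadj (fun x y => leQ (mul x y) (mul u v)) a (tclosed_mul_le _));
      [|apply (clat_refl clQ)].
    apply (sup_le clQ). intros q [x [y [Hxy ->]]]. now apply (clat_trans clQ) with (mul u v).
Qed.

Lemma mstar_tframe_hom : is_multiplicative D -> tframe_hom D mstar.
Proof.
  intros [g [Hg [Hadj Hgsup]]].
  pose proof (muA_right_adjoint_char g Hg Hadj) as Hgm.
  apply (tframe_hom_of_le_char _ mul); [intros; apply tclos_closed | exact mstar_char|].
  intros P u v Huv. apply Hgm, Hgsup in Huv. revert Huv. apply tclos_mono.
  intros x y [a [Pa Ha]]. exists a. split; [exact Pa | now apply Hgm].
Qed.

Lemma dstar_frame_hom : frame_hom leA supA leQ supQ dstar.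
Proof.
  split; [|split].
  - intros P. apply actl_supA.
  - intros a b. unfold dstar. fold meetA meetQ.
    now rewrite actl_meet, meetQ_actl, meetQ_top_l.
  - apply actl_top.
Qed.

Lemma istar_frame_hom : frame_hom leQ supQ leQ supQ (istar D).
Proof.
  split; [exact star_sup | split; [|exact star_top]].
  intros x y. unfold istar. fold meetQ. apply (clat_antisym clQ).
  - apply (le_meet_iff clQ).
    split; apply star_mono; [apply (meet_le_l clQ) | apply (meet_le_r clQ)].
  - apply le_star, (le_meet_iff clQ).
    split; apply le_star; [apply (meet_le_l clQ) | apply (meet_le_r clQ)].
Qed.

Lemma pi1star_rstar a : teq D (pi1star (rstar D a)) (pi2star (dstar a)).
Proof.
  rewrite rstar_actr.
  apply tclos_teq; intros x y [-> ->];
    apply (proj2 (proj2 (proj2 (tclos_closed _ _))) topQ a topQ); now apply tclos_incl.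
Qed.

(* [<-] from u v = (u <| s(v)) v; [->] from u <| s(v) <= u (s(v) |> 1) <= u v v^* 1. *)
Lemma mul_le_dstar u v a :
  leQ (mul u v) (dstar a) <-> leQ (actr u (supp v)) (dstar a).
Proof.
  unfold dstar. split; intros H.
  - apply (clat_trans clQ) with (1 := le_mul_top _). rewrite mul_actr.
    apply (clat_trans clQ) with (mul u (mul (mul v (star v)) topQ));
      [apply mul_mono; [apply (clat_refl clQ) | apply supp_le]|].
    rewrite <- !mulA.
    apply (clat_trans clQ) with (mul (mul (actl a topQ) (star v)) topQ);
      [apply mul_mono; [apply mul_mono; [exact H|]|]; apply (clat_refl clQ)|].
    rewrite !mul_actl. apply actl_mono; [apply (clat_refl clA) | apply (le_top clQ)].
  - rewrite <- (supp_actl_id v), <- mul_actr.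
    apply (clat_trans clQ) with (mul (actl a topQ) v);
      [apply mul_mono; [exact H | apply (clat_refl clQ)]|].
    rewrite mul_actl. apply actl_mono; [apply (clat_refl clA) | apply (le_top clQ)].
Qed.

Lemma mul_le_rstar u v a :
  leQ (mul u v) (rstar D a) <-> leQ (actl (supp (star u)) v) (rstar D a).
Proof.
  rewrite rstar_actr. split; intros H.
  - apply (clat_trans clQ) with (1 := supp_le _ _). rewrite starK, mulA.
    apply (clat_trans clQ) with (mul (star u) (actr topQ a));
      [apply mul_mono; [apply (clat_refl clQ) | exact H]|].
    rewrite <- actr_mul. apply actr_mono; [apply (le_top clQ) | apply (clat_refl clA)].
  - rewrite <- (actr_supp_star u), mul_actr.
    apply (clat_trans clQ) with (mul u (actr topQ a));
      [apply mul_mono; [apply (clat_refl clQ) | exact H]|].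
    rewrite <- actr_mul. apply actr_mono; [apply (le_top clQ) | apply (clat_refl clA)].
Qed.

Lemma mstar_dstar a : teq D (mstar (dstar a)) (pi1star (dstar a)).
Proof. intros u v. now rewrite mstar_char, pi1star_char, mul_le_dstar. Qed.

Lemma mstar_rstar a : teq D (mstar (rstar D a)) (pi2star (rstar D a)).
Proof. intros u v. now rewrite mstar_char, pi2star_char, mul_le_rstar. Qed.

Lemma mstar_assoc a : teq3 D (m_id_star D (mstar a)) (id_m_star D (mstar a)).
Proof. apply tclos3_ext. intros x y z. now rewrite !mstar_char, mulA. Qed.

Lemma mstar_istar a : teq D (mstar (istar D a)) (twist_star D (mstar a)).
Proof. intros u v. unfold twist_star, istar. now rewrite !mstar_char, <- star_mul, le_star. Qed.

Lemma supp_le_iff x a : leA (supp x) a <-> leQ x (dstar a).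
Proof.
  unfold dstar. split; intros H.
  - rewrite <- (supp_actl_id x). apply actl_mono; [exact H | apply (le_top clQ)].
  - apply (clat_trans clA) with (1 := supp_mono _ _ H).
    rewrite supp_actl, supp_top. apply (meet_le_l clA).
Qed.

Lemma supp_meet_dstar x a : supp (meetQ x (dstar a)) = meetA (supp x) a.
Proof.
  unfold dstar. now rewrite meetQ_comm, meetQ_actl, meetQ_top_l, supp_actl,
    meetA_comm.
Qed.
End SupportedQuantalFrame.

Theorem theorem4p20 (D : qdata)
  (HQ : is_based_quantal_frame D)
  (Hs : is_equivariant_support D)
  (Hm : is_multiplicative D) :
  involutive_open_semicategory D.
Proof.
  split; [now apply dstar_frame_hom|].
  split; [now apply istar_frame_hom|].
  split; [now apply pi1star_tframe_hom|].
  split; [now apply pi2star_tframe_hom|].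
  split; [now apply mstar_tframe_hom|].
  split; [now apply pi1star_rstar|].
  split; [now apply mstar_dstar|].
  split; [now apply mstar_rstar|].
  split; [now apply mstar_assoc|].
  split; [now apply starK|].
  split; [reflexivity|].
  split; [now apply mstar_istar|].
  exists (supp D). split; [now apply supp_le_iff | now apply supp_meet_dstar].
Qed.
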